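(* Let $\Phi=(A;\{E_i\}_{i=0}^d;A^*;\{E^*_i\}_{i=0}^d)$ be a tridiagonal system on $V$ with $d\ge1$, such that $(A,A^* )$ satisfies the $q$-Serre relations, with $E_iV$ the eigenspace of $A$ for $\theta_i=q^{2i-d}$ and $E^*_iV$ the eigenspace of $A^*$ for $\theta^*_i=q^{d-2i}$. Let $\{U_i\}_{i=0}^d$ be its split decomposition, $K:V\to V$ the linear map acting on $U_i$ as $q^{d-2i}I$, $t$ a scalar, $B^*=tA^*+(1-t)K$, and let $E'_0$ be the primitive idempotent of $B^*$ for the eigenvalue $\theta^*_0$. Then $U_0=E'_0V$.
   Context: $\mathcal K$ is an algebraically closed field; $V$ is a nonzero finite-dimensional vector space over $\mathcal K$; $q\in\mathcal K$ is nonzero and not a root of unity; $[3]_q=q^2+1+q^{-2}$. The $q$-Serre relations for $(X,Y)$: $X^3Y-[3]_qX^2YX+[3]_qXYX^2-YX^3=0$ and $Y^3X-[3]_qY^2XY+[3]_qYXY^2-XY^3=0$. Primitive idempotent of a diagonalizable $X$ for eigenvalue $\lambda_i$: $\prod_{j\ne i}\frac{X-\lambda_jI}{\lambda_i-\lambda_j}$. A tridiagonal system on $V$ is a sequence $(A;\{E_i\}_{i=0}^d;A^*;\{E^*_i\}_{i=0}^d)$ with $A,A^*$ diagonalizable, $\{E_i\}$, $\{E^*_i\}$ orderings of their primitive idempotents, $E_iA^*E_j=0$ and $E^*_iAE^*_j=0$ when $|i-j|>1$, and no subspaces other than $0,V$ invariant under both $A$ and $A^*$. Split decomposition: $U_i=(E^*_0V+\cdots+E^*_iV)\cap(E_iV+\cdots+E_dV)$;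 known: $V=U_0\oplus\cdots\oplus U_d$, $(A-\theta_iI)U_i\subseteq U_{i+1}$, $(A^*-\theta^*_iI)U_i\subseteq U_{i-1}$ ($U_{-1}=U_{d+1}=0$). It is a fact (proved in the paper) that $B^*$ is diagonalizable with eigenvalues $\theta^*_0,\dots,\theta^*_d$ and $\theta^*_i$-eigenspace of dimension $\dim U_i$. *)

From HB Require Import structures.
From mathcomp Require Import all_boot all_order all_algebra.
Set Implicit Arguments. Unset Strict Implicit. Unset Printing Implicit Defensive.
Import Order.TTheory GRing.Theory Num.Theory.
Local Open Scope ring_scope.

(* Convention: V = 'rV[F]_n.+1 (nonzero, finite-dimensional); linear maps are
   square matrices acting on the right of row vectors (v |-> v *m X);
   subspaces are row spaces of matrices (mxalgebra, %MS). Then X V is the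
   row space of X. *)

Section Defs.
Variable F : closedFieldType.

Definition eigs n (X : 'M[F]_n) : seq F :=
  undup (sval (closed_field_poly_normal (char_poly X))).

Definition prim_idem n (X : 'M[F]_n.+1) (lam : F) : 'M[F]_n.+1 :=
  \prod_(mu <- eigs X | mu != lam) ((lam - mu)^-1 *: (X - mu%:M)).

Definition theta (q : F) (d i : nat) : F := q ^ ((2 * i)%:Z - d%:Z).
Definition theta_s (q : F) (d i : nat) : F := q ^ (d%:Z - (2 * i)%:Z).

Definition split_sp n d (E Es : 'I_d.+1 -> 'M[F]_n) (i : 'I_d.+1) : 'M[F]_n :=
  ((\sum_(k < d.+1 | (k <= i)%N) Es k) :&: (\sum_(k < d.+1 | (i <= k)%N) E k))%MS.

End Defs.

From HB Require Import structures.
From mathcomp Require Import all_boot all_order all_algebra.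
From mathcomp Require Import zify.
Import Order.TTheory GRing.Theory Num.Theory.
Local Open Scope ring_scope.
Set Implicit Arguments. Unset Strict Implicit. Unset Printing Implicit Defensive.

(* On the split decomposition, A - theta_i raises U_i into U_(i+1) and A* - theta*_i
   lowers U_i into U_(i-1); hence U_0 + ... + U_d is invariant under A and A*, and is
   all of V by irreducibility. As K acts on U_i as theta*_i, B* - theta*_i agrees with
   t (A* - theta*_i) on U_i, so B* lowers the flag U_0 + ... + U_i with diagonal
   entries theta*_i. Since these are distinct, B* is diagonalizable with eigenvalues
   among them, so E'_0 V is the theta*_0-eigenspace of B*. That eigenspace contains U_0,
   and it lies in U_0 because each B* - theta*_i (i > 0) acts on it as a nonzero
   scalar while pushing it one step down the flag. *)

Section EigenspaceSums.
Variables (F : fieldType) (n : nat).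
Implicit Types (X : 'M[F]_n) (r c : F).

Lemma sumsmx_mono (I : finType) (P Q : pred I) (B : I -> 'M[F]_n) :
  (forall i, P i -> Q i) -> (\sum_(i | P i) B i <= \sum_(i | Q i) B i)%MS.
Proof. by move=> PQ; apply/sumsmx_subP => i /PQ Qi; apply: (sumsmx_sup i). Qed.

Lemma sub_addsmx_kermx m1 m2 p (W : 'M[F]_(m1, n)) (T : 'M_(m2, n)) (M : 'M_(n, p)) :
  (W *m M <= T *m M)%MS -> (W <= T + kermx M)%MS.
Proof.
case/submxP => D WM; rewrite -(subrK (D *m T) W) addrC addmx_sub_adds ?submxMl //.
by rewrite sub_kermx mulmxBl WM mulmxA subrr.
Qed.

Lemma mulmx_shift_sub m p (S : 'M_(m, n)) (T : 'M_(p, n)) X c :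
  (S *m X <= T)%MS -> (S <= T)%MS -> (S *m (X - c%:M) <= T)%MS.
Proof.
by move=> SX ST; rewrite mulmxBr mul_mx_scalar addmx_sub // eqmx_opp scalemx_sub.
Qed.

Lemma eigenspace_shift X r c :
  eigenspace X r *m (X - c%:M) = (r - c) *: eigenspace X r.
Proof.
rewrite mulmxBr mul_mx_scalar scalerBl.
by have /eigenspaceP -> := submx_refl (eigenspace X r).
Qed.

Lemma rows_sub_eigenspace p (S : 'M_(p, n)) X r :
  (forall v : 'rV_n, (v <= S)%MS -> v *m X = r *: v) -> (S <= eigenspace X r)%MS.
Proof. by move=> SX; apply/row_subP => i; apply/eigenspaceP/SX/row_sub. Qed.

Section Indexed.
Variables (m : nat) (X : 'M[F]_n) (g : nat -> F).

Lemma sum_eigenspace_shift_sub (P Q : pred 'I_m) (i : nat) :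
  (forall k : 'I_m, P k -> k != i :> nat -> Q k) ->
  ((\sum_(k | P k) eigenspace X (g k))%MS *m (X - (g i)%:M)
     <= \sum_(k | Q k) eigenspace X (g k))%MS.
Proof.
move=> PQ; rewrite sumsmxMr; apply/sumsmx_subP => k Pk; rewrite eigenspace_shift.
have [-> | ki] := eqVneq (k : nat) i; first by rewrite subrr scale0r sub0mx.
by apply/scalemx_sub/(sumsmx_sup k) => //; apply: PQ.
Qed.

Lemma sum_eigenspace_sub_shift (P : pred 'I_m) c :
  (forall k : 'I_m, P k -> g k != c) ->
  (\sum_(k | P k) eigenspace X (g k)
     <= (\sum_(k | P k) eigenspace X (g k))%MS *m (X - c%:M))%MS.
Proof.
move=> gc; rewrite sumsmxMr; apply: sumsmxS => k Pk.
by rewrite eigenspace_shift eqmx_scale // subr_eq0 gc.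
Qed.

End Indexed.
End EigenspaceSums.

Section PrimitiveIdempotent.
Variables (F : closedFieldType) (n : nat).
Implicit Types (X : 'M[F]_n.+1) (r lam : F).

Lemma eigenvalue_mem_eigs X r : eigenvalue X r -> r \in eigs X.
Proof.
rewrite eigenvalue_root_char /eigs mem_undup.
case: (closed_field_poly_normal _) => s /= ->.
by rewrite rootZ ?root_prod_XsubC // lead_coef_eq0 -size_poly_eq0 size_char_poly.
Qed.

Lemma eigen_mul_prim_idem m (W : 'M_(m, n.+1)) X r lam : W *m X = r *: W ->
  W *m prim_idem X lam
  = (\prod_(mu <- eigs X | mu != lam) ((lam - mu)^-1 * (r - mu))) *: W.
Proof.
rewrite /prim_idem => WX; elim: (eigs X) => [|mu s IHs].
  by rewrite !big_nil mulmx1 scale1r.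
rewrite !big_cons; case: (mu != lam) => //.
rewrite -mulmxE mulmxA -scalemxAr mulmxBr mul_mx_scalar WX -scalerBl.
by rewrite -!scalemxAl IHs !scalerA.
Qed.

Lemma eigenspace_mul_prim_idem_id X lam :
  eigenspace X lam *m prim_idem X lam = eigenspace X lam.
Proof.
rewrite (eigen_mul_prim_idem _ (eigenspaceP (submx_refl _))).
by rewrite big1_seq ?scale1r // => mu /andP[mu_lam _]; rewrite mulVf // subr_eq0 eq_sym.
Qed.

Lemma eigenspace_mul_prim_idem_neq X r lam : r != lam ->
  eigenspace X r *m prim_idem X lam = 0.
Proof.
move=> r_lam; rewrite (eigen_mul_prim_idem _ (eigenspaceP (submx_refl _))).
have [/eigenvalue_mem_eigs r_eig | /negPn/eqP ->] := boolP (eigenvalue X r); last first.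
  by rewrite scaler0.
apply/eqP; rewrite scaler_eq0 prodf_seq_eq0; apply/orP; left.
by apply/hasP; exists r; rewrite // r_lam subrr mulr0 eqxx.
Qed.

Lemma eigenspace_sub_prim_idem X lam : (eigenspace X lam <= prim_idem X lam)%MS.
Proof. by rewrite -{1}eigenspace_mul_prim_idem_id submxMl. Qed.

Section Spectrum.
Variables (m : nat) (f : 'I_m -> F) (X : 'M[F]_n.+1).
Hypothesis X_spec : (1%:M <= \sum_i eigenspace X (f i))%MS.

Lemma eigenspaces_mul_eq0 p (M : 'M_(n.+1, p)) :
  (forall i, eigenspace X (f i) *m M = 0) -> M = 0.
Proof.
move=> eigM; apply/eqP; rewrite -[M]mul1mx -sub_kermx.
apply: submx_trans X_spec _; apply/sumsmx_subP => i _.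
by rewrite sub_kermx eigM.
Qed.

Lemma prim_idem_eigenspace lam : (prim_idem X lam :=: eigenspace X lam)%MS.
Proof.
apply/eqmxP; rewrite eigenspace_sub_prim_idem andbT /eigenspace sub_kermx.
apply/eqP/eigenspaces_mul_eq0 => i; rewrite mulmxA.
have [->|ne] := eqVneq (f i) lam; last by rewrite eigenspace_mul_prim_idem_neq ?mul0mx.
by rewrite eigenspace_mul_prim_idem_id eigenspace_shift subrr scale0r.
Qed.

Hypothesis f_inj : injective f.

Lemma sum_prim_idem : \sum_i prim_idem X (f i) = 1%:M.
Proof.
apply/eqP; rewrite -subr_eq0; apply/eqP/eigenspaces_mul_eq0 => i.
rewrite mulmxBr mulmx1 mulmx_sumr (bigD1 i) //= eigenspace_mul_prim_idem_id.
rewrite big1 ?addr0 ?subrr // => j ji.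
by rewrite eigenspace_mul_prim_idem_neq // (inj_eq f_inj) eq_sym.
Qed.

(* Insert [1 = \sum_j prim_idem X (f j)] after [Y]; the image of [prim_idem X (f k)]
   is the eigenspace for [f k]. *)
Lemma eigenspace_mul_sub Y k (P : pred 'I_m) :
  (forall j, ~~ P j -> prim_idem X (f k) *m Y *m prim_idem X (f j) = 0) ->
  (eigenspace X (f k) *m Y <= \sum_(j | P j) eigenspace X (f j))%MS.
Proof.
move=> EYE0; rewrite -[_ *m Y]mulmx1 -sum_prim_idem mulmx_sumr.
apply: summx_sub => j _; have [Pj | nPj] := boolP (P j).
  by apply: (sumsmx_sup j) => //; rewrite -(prim_idem_eigenspace (f j)) submxMl.
rewrite -{1}eigenspace_mul_prim_idem_id -2!mulmxA (mulmxA (prim_idem _ _)) EYE0 //.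
by rewrite mulmx0 sub0mx.
Qed.

End Spectrum.

Lemma diagonalizable_spectrum m (f : 'I_m -> F) X : diagonalizable X ->
  (forall lam, eigenvalue X lam -> exists i, lam = f i) ->
  (1%:M <= \sum_i eigenspace X (f i))%MS.
Proof.
move=> /diagonalizablePeigen [rs _ <-] X_spec.
elim/big_ind: _ => [|S T S_sub T_sub|r _]; first exact: sub0mx.
  by rewrite addsmx_sub S_sub.
have [/X_spec [i ->] | ] := boolP (eigenvalue X r).
  exact: (sumsmx_sup i).
by rewrite negbK => /eqP ->; exact: sub0mx.
Qed.

End PrimitiveIdempotent.

Lemma expfz_inj (R : fieldType) (q : R) :
  q != 0 -> (forall m, (0 < m)%N -> q ^+ m != 1) -> injective (fun z : int => q ^ z).
Proof.
move=> q0 qN1 a b /= qab; apply/eqP; rewrite -subr_eq0; apply/eqP.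
have : q ^ (a - b) = 1 by rewrite expfzDr // -invr_expz qab divff // expfz_neq0.
case: (a - b) => [[|k] | k] // qk; have := qN1 k.+1 isT.
  by rewrite -[q ^+ _]/(q ^ Posz k.+1) qk eqxx.
by rewrite -invr_eq1 -[_^-1]/(q ^ Negz k) qk eqxx.
Qed.

Section ThetaInjective.
Variables (F : closedFieldType) (q : F) (d : nat).
Hypotheses (q0 : q != 0) (qN1 : forall m, (0 < m)%N -> q ^+ m != 1).

Lemma theta_inj : injective (fun i : 'I_d.+1 => theta q d i).
Proof. by move=> i j /(expfz_inj q0 qN1) ij; apply: ord_inj; lia. Qed.

Lemma theta_s_inj : injective (fun i : 'I_d.+1 => theta_s q d i).
Proof. by move=> i j /(expfz_inj q0 qN1) ij; apply: ord_inj; lia. Qed.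

End ThetaInjective.

Section SplitDecomposition.
Variables (F : closedFieldType) (n d : nat) (th ths : nat -> F).
Variables (A As : 'M[F]_n.+1).
Hypotheses (th_inj : injective (fun i : 'I_d.+1 => th i))
           (ths_inj : injective (fun i : 'I_d.+1 => ths i)).
Hypotheses (A_spec : (1%:M <= \sum_(i < d.+1) eigenspace A (th i))%MS)
           (As_spec : (1%:M <= \sum_(i < d.+1) eigenspace As (ths i))%MS).
Hypothesis A_tridiag : forall i j : 'I_d.+1, (i.+1 < j)%N || (j.+1 < i)%N ->
  prim_idem A (th i) *m As *m prim_idem A (th j) = 0.
Hypothesis As_tridiag : forall i j : 'I_d.+1, (i.+1 < j)%N || (j.+1 < i)%N ->
  prim_idem As (ths i) *m A *m prim_idem As (ths j) = 0.

Local Notation E k := (eigenspace A (th k)).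
Local Notation Es k := (eigenspace As (ths k)).

Definition splitU (i : nat) : 'M[F]_n.+1 :=
  ((\sum_(k < d.+1 | (k <= i)%N) Es k) :&: (\sum_(k < d.+1 | (i <= k)%N) E k))%MS.

Definition split_flag (i : nat) : 'M[F]_n.+1 :=
  (\sum_(j < d.+1 | (j <= i)%N) splitU j)%MS.

Lemma split_sp_eqmx (i : 'I_d.+1) :
  (split_sp (fun k : 'I_d.+1 => prim_idem A (th k))
            (fun k : 'I_d.+1 => prim_idem As (ths k)) i :=: splitU i)%MS.
Proof.
apply: cap_eqmx; apply: eqmx_sums => k _.
  exact: (prim_idem_eigenspace As_spec).
exact: (prim_idem_eigenspace A_spec).
Qed.

Lemma ths_neq (j k : nat) : (j < d.+1)%N -> (k < d.+1)%N -> j != k -> ths j != ths k.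
Proof.
move=> jd kd; apply: contraNneq => ths_jk.
by have /(congr1 val) /= -> := ths_inj (x1 := Ordinal jd) (x2 := Ordinal kd) ths_jk.
Qed.

Lemma E_mul_As (k : 'I_d.+1) :
  (E k *m As <= \sum_(j < d.+1 | (k <= j.+1)%N) E j)%MS.
Proof.
apply: (eigenspace_mul_sub A_spec th_inj) => j; rewrite -ltnNge => jk.
by apply: A_tridiag; rewrite jk orbT.
Qed.

Lemma Es_mul_A (k : 'I_d.+1) :
  (Es k *m A <= \sum_(j < d.+1 | (j <= k.+1)%N) Es j)%MS.
Proof.
apply: (eigenspace_mul_sub As_spec ths_inj) => j; rewrite -ltnNge => kj.
by apply: As_tridiag; rewrite kj.
Qed.

Lemma splitU_raise i : (splitU i *m (A - (th i)%:M) <= splitU i.+1)%MS.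
Proof.
rewrite sub_capmx; apply/andP; split.
  apply: submx_trans (submxMr _ (capmxSl _ _)) _.
  apply: mulmx_shift_sub; last by apply: sumsmx_mono => k; lia.
  rewrite sumsmxMr; apply/sumsmx_subP => k ki.
  by apply: submx_trans (Es_mul_A k) _; apply: sumsmx_mono => j; lia.
apply: submx_trans (submxMr _ (capmxSr _ _)) _.
by apply: sum_eigenspace_shift_sub => k; lia.
Qed.

Lemma splitU_lower i : (splitU i.+1 *m (As - (ths i.+1)%:M) <= splitU i)%MS.
Proof.
rewrite sub_capmx; apply/andP; split.
  apply: submx_trans (submxMr _ (capmxSl _ _)) _.
  by apply: sum_eigenspace_shift_sub => k; lia.
apply: submx_trans (submxMr _ (capmxSr _ _)) _.
apply: mulmx_shift_sub; last by apply: sumsmx_mono => k; lia.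
rewrite sumsmxMr; apply/sumsmx_subP => k ki.
by apply: submx_trans (E_mul_As k) _; apply: sumsmx_mono => j; lia.
Qed.

Lemma splitU0_sub_eigenspace : (splitU 0 <= Es 0)%MS.
Proof.
by apply: submx_trans (capmxSl _ _) _; apply/sumsmx_subP => k; rewrite leqn0 => /eqP ->.
Qed.

Lemma eigenspace_sub_splitU0 : (Es 0 <= splitU 0)%MS.
Proof.
rewrite sub_capmx (sumsmx_sup ord0) //=.
by apply: submx_trans (submx1 _) (submx_trans A_spec _); apply: sumsmx_mono.
Qed.

Lemma splitU_eq0 i : (d < i)%N -> splitU i = 0.
Proof.
move=> di; apply/eqP; rewrite -submx0; apply: submx_trans (capmxSr _ _) _.
by apply/sumsmx_subP => k ik; have := ltn_ord k; lia.
Qed.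

Lemma splitU_sub_split_flag j i : (j <= i)%N -> (splitU j <= split_flag i)%MS.
Proof.
move=> ji; have [jd | dj] := ltnP j d.+1; first exact: (sumsmx_sup (Ordinal jd)).
by rewrite splitU_eq0 ?sub0mx.
Qed.

Lemma split_flag_subd i : (split_flag i <= split_flag d)%MS.
Proof. by apply: sumsmx_mono => k _; rewrite -ltnS. Qed.

Lemma split_flag0 : (split_flag 0 <= splitU 0)%MS.
Proof. by apply/sumsmx_subP => k; rewrite leqn0 => /eqP ->. Qed.

Lemma split_flag_raise i : (split_flag i *m A <= split_flag i.+1)%MS.
Proof.
rewrite sumsmxMr; apply/sumsmx_subP => j ji.
rewrite -[A](subrK (th j)%:M) mulmxDr mul_mx_scalar addmx_sub ?scalemx_sub //.
  exact: submx_trans (splitU_raise j) (splitU_sub_split_flag _).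
by apply: splitU_sub_split_flag; lia.
Qed.

Lemma split_flag_stable_As i : stablemx (split_flag i) As.
Proof.
rewrite sumsmxMr; apply/sumsmx_subP => j ji.
rewrite -[As](subrK (ths j)%:M) mulmxDr mul_mx_scalar addmx_sub ?scalemx_sub //.
  case: j ji => [[|j] /= _ ji].
    by rewrite (sub_kermxP splitU0_sub_eigenspace) sub0mx.
  by apply: submx_trans (splitU_lower j) (splitU_sub_split_flag _); lia.
exact: splitU_sub_split_flag.
Qed.

Hypothesis irreducible : forall W : 'M[F]_n.+1, stablemx W A -> stablemx W As ->
  (W == (0 : 'M[F]_n.+1))%MS || (W == (1%:M : 'M[F]_n.+1))%MS.
Hypothesis ths0_eigenvalue : eigenvalue As (ths 0).

Lemma split_flag_full : (1%:M <= split_flag d)%MS.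
Proof.
have A_stable : stablemx (split_flag d) A.
  exact: submx_trans (split_flag_raise d) (split_flag_subd _).
case/orP: (irreducible A_stable (split_flag_stable_As d)) => /andP[// S0 _].
have Es0 : (Es 0 <= (0 : 'M[F]_n.+1))%MS.
  exact: submx_trans eigenspace_sub_splitU0 (submx_trans (splitU_sub_split_flag (leq0n d)) S0).
by move: ths0_eigenvalue; rewrite /eigenvalue -submx0 Es0.
Qed.

Variables (t : F) (K : 'M[F]_n.+1).
Hypothesis K_split : forall i : 'I_d.+1, (splitU i <= eigenspace K (ths i))%MS.

Local Notation Bs := (t *: As + (1 - t) *: K).
Local Notation Eb k := (eigenspace Bs (ths k)).

Lemma split_flag_stable_K i : stablemx (split_flag i) K.
Proof.
rewrite sumsmxMr; apply/sumsmx_subP => j ji.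
by have /eigenspaceP -> := K_split j; rewrite scalemx_sub // (sumsmx_sup j).
Qed.

Lemma split_flag_stable_shiftB i c : stablemx (split_flag i) (Bs - c%:M).
Proof.
apply: mulmx_shift_sub => //; rewrite mulmxDr -!scalemxAr.
by rewrite addmx_sub ?scalemx_sub ?split_flag_stable_As ?split_flag_stable_K.
Qed.

Lemma splitU0_sub_eigenspaceB : (splitU 0 <= Eb 0)%MS.
Proof.
apply/eigenspaceP; rewrite mulmxDr -!scalemxAr.
have /eigenspaceP -> := splitU0_sub_eigenspace.
have /eigenspaceP -> := K_split ord0.
by rewrite !scalerA -scalerDl mulrBl mul1r addrC subrK.
Qed.

Lemma splitU_lowerB i : (i < d)%N ->
  (splitU i.+1 *m (Bs - (ths i.+1)%:M) <= splitU i)%MS.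
Proof.
move=> lt_id; have /eigenspaceP UK := K_split (Ordinal (lt_id : i.+1 < d.+1)%N).
have -> : splitU i.+1 *m (Bs - (ths i.+1)%:M)
          = t *: (splitU i.+1 *m (As - (ths i.+1)%:M)).
  rewrite !mulmxBr mulmxDr -!scalemxAr UK !mul_mx_scalar.
  by rewrite scalerBl scale1r scalerBr addrA addrAC addrK.
by rewrite scalemx_sub ?splitU_lower.
Qed.

Lemma split_flag_lowerB i : (i < d)%N ->
  (split_flag i.+1 *m (Bs - (ths i.+1)%:M) <= split_flag i)%MS.
Proof.
move=> lt_id; rewrite sumsmxMr; apply/sumsmx_subP => j; rewrite leq_eqVlt ltnS.
case/orP => [/eqP -> | le_ji].
  exact: submx_trans (splitU_lowerB lt_id) (splitU_sub_split_flag _).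
exact: submx_trans (submxMr _ (splitU_sub_split_flag le_ji)) (split_flag_stable_shiftB _ _).
Qed.

(* [Bs] lowers the flag [split_flag] with the distinct diagonal entries [ths i]. *)
Lemma split_flag_sub_eigenspacesB i : (i <= d)%N ->
  (split_flag i <= \sum_(k < d.+1 | (k <= i)%N) Eb k)%MS.
Proof.
elim: i => [_ | i IHi lt_id].
  apply: submx_trans split_flag0 (submx_trans splitU0_sub_eigenspaceB _).
  exact: (sumsmx_sup ord0).
set T := (\sum_(k < d.+1 | (k <= i)%N) Eb k)%MS.
have T_shift : (T <= T *m (Bs - (ths i.+1)%:M))%MS.
  by apply: sum_eigenspace_sub_shift => k le_ki; apply: ths_neq; lia.
have flag_shift :
    (split_flag i.+1 *m (Bs - (ths i.+1)%:M) <= T *m (Bs - (ths i.+1)%:M))%MS.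
  exact: submx_trans (split_flag_lowerB lt_id) (submx_trans (IHi (ltnW lt_id)) T_shift).
apply: submx_trans (sub_addsmx_kermx flag_shift) _.
rewrite addsmx_sub; apply/andP; split; first by apply: sumsmx_mono => k; lia.
exact: (sumsmx_sup (Ordinal (lt_id : i.+1 < d.+1)%N)).
Qed.

Lemma Bs_spectrum : (1%:M <= \sum_(k < d.+1) Eb k)%MS.
Proof.
apply: submx_trans split_flag_full (submx_trans (split_flag_sub_eigenspacesB (leqnn d)) _).
exact: sumsmx_mono.
Qed.

(* An eigenvector for [ths 0] is fixed up to a nonzero scalar by [Bs - ths i.+1],
   which maps [split_flag i.+1] into [split_flag i]. *)
Lemma eigenspaceB0_sub_splitU0 : (Eb 0 <= splitU 0)%MS.
Proof.
suff descend i : (i <= d)%N -> (Eb 0 <= split_flag i)%MS -> (Eb 0 <= split_flag 0)%MS.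
  apply: submx_trans split_flag0.
  exact: descend d (leqnn d) (submx_trans (submx1 _) split_flag_full).
elim: i => [// | i IHi] lt_id Eb0_flag; apply: IHi (ltnW lt_id) _.
rewrite -(eqmx_scale _ (_ : ths 0 - ths i.+1 != 0)); last by rewrite subr_eq0 ths_neq.
rewrite -eigenspace_shift.
exact: submx_trans (submxMr _ Eb0_flag) (split_flag_lowerB lt_id).
Qed.

Theorem split_sp0_eq_prim_idem :
  (split_sp (fun k : 'I_d.+1 => prim_idem A (th k))
            (fun k : 'I_d.+1 => prim_idem As (ths k)) ord0
   == prim_idem Bs (ths 0))%MS.
Proof.
apply/andP; split; rewrite split_sp_eqmx (prim_idem_eigenspace Bs_spectrum (ths 0)).
  exact: splitU0_sub_eigenspaceB.
exact: eigenspaceB0_sub_splitU0.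
Qed.

End SplitDecomposition.

Theorem lemma7p7 (F : closedFieldType) (n d : nat) (q t : F)
  (A As K : 'M[F]_n.+1) :
  (1 <= d)%N ->
  q != 0 ->
  (forall m : nat, (0 < m)%N -> q ^+ m != 1) ->
  (* A, A* diagonalizable with eigenvalues exactly theta_0..theta_d, resp.
     theta*_0..theta*_d *)
  diagonalizable A -> diagonalizable As ->
  (forall i : 'I_d.+1, eigenvalue A (theta q d i)) ->
  (forall lam, eigenvalue A lam -> exists i : 'I_d.+1, lam = theta q d i) ->
  (forall i : 'I_d.+1, eigenvalue As (theta_s q d i)) ->
  (forall lam, eigenvalue As lam -> exists i : 'I_d.+1, lam = theta_s q d i) ->
  (* tridiagonality *)
  (forall i j : 'I_d.+1, (i.+1 < j)%N || (j.+1 < i)%N ->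
     prim_idem A (theta q d i) *m As *m prim_idem A (theta q d j) = 0) ->
  (forall i j : 'I_d.+1, (i.+1 < j)%N || (j.+1 < i)%N ->
     prim_idem As (theta_s q d i) *m A *m prim_idem As (theta_s q d j) = 0) ->
  (* irreducibility *)
  (forall W : 'M[F]_n.+1, stablemx W A -> stablemx W As ->
     (W == (0 : 'M[F]_n.+1))%MS || (W == (1%:M : 'M[F]_n.+1))%MS) ->
  (* q-Serre relations *)
  A ^+ 3 * As - (q ^+ 2 + 1 + q ^- 2) *: (A ^+ 2 * As * A)
    + (q ^+ 2 + 1 + q ^- 2) *: (A * As * A ^+ 2) - As * A ^+ 3 = 0 ->
  As ^+ 3 * A - (q ^+ 2 + 1 + q ^- 2) *: (As ^+ 2 * A * As)
    + (q ^+ 2 + 1 + q ^- 2) *: (As * A * As ^+ 2) - A * As ^+ 3 = 0 ->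
  (* K acts on U_i as q^(d-2i) I *)
  (forall (i : 'I_d.+1) (v : 'rV[F]_n.+1),
     (v <= split_sp (fun k : 'I_d.+1 => prim_idem A (theta q d k))
                    (fun k : 'I_d.+1 => prim_idem As (theta_s q d k)) i)%MS ->
     v *m K = theta_s q d i *: v) ->
  (split_sp (fun k : 'I_d.+1 => prim_idem A (theta q d k))
            (fun k : 'I_d.+1 => prim_idem As (theta_s q d k)) ord0
   == prim_idem (t *: As + (1 - t) *: K) (theta_s q d 0))%MS.
Proof.
move=> _ q0 qN1 A_diag As_diag _ A_eig As_eig0 As_eig A_tridiag As_tridiag irr _ _ K_split.
have A_spec := diagonalizable_spectrum A_diag A_eig.
have As_spec := diagonalizable_spectrum As_diag As_eig.
apply: (split_sp0_eq_prim_idem (theta_inj q0 qN1) (theta_s_inj q0 qN1) A_spec As_spec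
          A_tridiag As_tridiag irr (As_eig0 ord0)) => i.
by rewrite -(split_sp_eqmx A_spec As_spec); apply: rows_sub_eigenspace; apply: K_split.
Qed.
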